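(* Let $u\equiv 7,11\pmod{12}$. Then $\Phi(u\times 2,4,2)\le\left\lfloor\frac{u}{4}\left\lfloor\frac{2u-1}{3}\left\lfloor\frac{2u-2}{2}\right\rfloor\right\rfloor\right\rfloor-1$.
   Context: A 2-D $(u\times v,4,2)$-OOC is a family $\mathcal C$ of $u\times v$ $(0,1)$-matrices of Hamming weight $4$ such that for all $A=(a_{ij}),B=(b_{ij})\in\mathcal C$ and integers $r$ with $A\ne B$ or $r\not\equiv0\pmod v$, $\sum_{i,j}a_{ij}b_{i,j+r}\le 2$ (column indices mod $v$). $\Phi(u\times v,4,2)$ is the largest size of such a code. *)

From mathcomp Require Import all_boot all_order all_algebra.
Set Implicit Arguments. Unset Strict Implicit. Unset Printing Implicit Defensive.

Definition cshift (v : nat) (j r : 'I_v) : 'I_v :=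
  Ordinal (ltn_pmod (j + r) (leq_ltn_trans (leq0n j) (ltn_ord j))).

Definition mweight (u v : nat) (A : 'M[bool]_(u, v)) : nat :=
  \sum_(i < u) \sum_(j < v) (A i j : nat).

Definition mcorr (u v : nat) (A B : 'M[bool]_(u, v)) (r : 'I_v) : nat :=
  \sum_(i < u) \sum_(j < v) ((A i j && B i (cshift j r)) : nat).

Definition is_OOC (u v w lam : nat) (C : {set 'M[bool]_(u, v)}) : bool :=
  [forall A in C, mweight A == w] &&
  [forall A in C, forall B in C, forall r : 'I_v,
     ((A != B) || (nat_of_ord r != 0%N)) ==> (mcorr A B r <= lam)].

Definition Phi (u v w lam : nat) : nat :=
  \max_(C : {set 'M[bool]_(u, v)} | is_OOC w lam C) #|C|.

From mathcomp Require Import all_boot all_order all_algebra zify ring.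
Set Implicit Arguments. Unset Strict Implicit. Unset Printing Implicit Defensive.

(* Each codeword A of a (u x 2, 4, 2)-OOC C gives two 4-subsets of the
   2u cells: its support and the support of its cyclic column shift.  The OOC
   conditions say exactly that any two of these 2|C| blocks meet in at most two
   cells, so every 3-subset of cells lies in at most one block.  Double
   counting the 3-subsets containing a fixed set Q of at most three cells gives
   the packing identity
       C(2u - |Q|, 3 - |Q|) = #holes(Q) + C(4 - |Q|, 3 - |Q|) * #blocks(Q),
   where a hole is a 3-subset covered by no block.  For Q empty it reads
   C(2u, 3) = #holes + 8|C|; for u = 7, 11 (mod 12) we have C(2u, 3) = 4q with
   q odd, so #holes = 4 (mod 8) and the bound follows once #holes = 4 is
   excluded.  With exactly four holes, Q a single cell shows every cell lies in
   0 or 3 holes, so the holes are the four triples of a 4-set S; S is closed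
   under the column flip (the holes are), and Q = {p, flip p} with p in S then
   forces 4 | 2, a contradiction. *)

Lemma card_setE (T : finType) (D : {set T}) (Pr : pred T) :
  #|[set x in D | Pr x]| = \sum_(x in D) Pr x.
Proof.
rewrite -sum1_card (eq_bigl (fun x => (x \in D) && Pr x)) => [|x]; last by rewrite inE.
by rewrite big_mkcondr; apply: eq_bigr => x _; case: (Pr x).
Qed.

Lemma sum_mem (T : finType) (X : {set T}) : \sum_p (p \in X : nat) = #|X|.
Proof. by rewrite -sum1_card [RHS]big_mkcond; apply: eq_bigr => p _; case: (p \in X). Qed.

Definition supsets (T : finType) (Q B : {set T}) (n : nat) : {set {set T}} :=
  [set X : {set T} | [&& Q \subset X, X \subset B & #|X| == n]].

(* Choosing the n-subsets of B through Q amounts to choosing their n - |Q|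
   points outside Q. *)
Lemma card_supsets (T : finType) (Q B : {set T}) (n : nat) : #|Q| <= n ->
  #|supsets Q B n| = (Q \subset B) * 'C(#|B :\: Q|, n - #|Q|).
Proof.
move=> leQn; have [QB|nQB] := boolP (Q \subset B); last first.
  rewrite mul0n; apply/eqP; rewrite cards_eq0; apply/eqP/setP => X; rewrite !inE.
  by apply/negbTE; apply: contra nQB => /and3P[QX XB _]; apply: subset_trans XB.
rewrite mul1n -cards_draws.
have -> : supsets Q B n =
    (fun Y => Y :|: Q) @: [set Y : {set T} | Y \subset B :\: Q & #|Y| == n - #|Q|].
  apply/setP => X; rewrite inE; apply/idP/imsetP => [/and3P[QX XB /eqP cX]|[Y]].
    exists (X :\: Q); first by rewrite inE setSD //= cardsD (setIidPr QX) cX.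
    by rewrite -{1}(setID X Q) (setIidPr QX) setUC.
  rewrite inE subsetD => /andP[/andP[YB disjYQ] /eqP cY] ->.
  rewrite subsetUr subUset YB QB cardsU.
  move: disjYQ; rewrite -setI_eq0 => /eqP ->.
  by rewrite cards0 cY subn0 (subnK leQn) eqxx.
rewrite card_in_imset // => Y1 Y2; rewrite !inE subsetD => /andP[/andP[_ d1] _].
rewrite subsetD => /andP[/andP[_ d2] _] E.
have drop_Q (Y : {set T}) : [disjoint Y & Q] -> (Y :|: Q) :\: Q = Y.
  by move=> /setDidPl dYQ; rewrite setDUl setDv setU0 dYQ.
by rewrite -(drop_Q Y1 d1) E drop_Q.
Qed.

Lemma supsets_through (T : finType) (Q B : {set T}) (n : nat) :
  [set X in supsets set0 B n | Q \subset X] = supsets Q B n.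
Proof. by apply/setP => X; rewrite !inE sub0set andbC. Qed.

Section Packing.
Variables (T I : finType) (k t : nat) (D : {set I}) (blk : I -> {set T}).
Hypothesis blk_card : {in D, forall i, #|blk i| = k}.
Hypothesis blk_meet : {in D &, forall i j, i != j -> #|blk i :&: blk j| < t}.

Definition covers (X : {set T}) : {set I} := [set i in D | X \subset blk i].

Definition holes (Q : {set T}) : {set {set T}} :=
  [set X in supsets Q [set: T] t | covers X == set0].

Lemma covers_le1 (X : {set T}) : #|X| = t -> #|covers X| <= 1.
Proof.
move=> cX; apply/card_le1_eqP => i j; rewrite !inE => /andP[iD Xi] /andP[jD Xj].
apply/eqP/negPn/negP; rewrite eq_sym => /(blk_meet iD jD).
by rewrite ltnNge -cX subset_leq_card // subsetI Xi Xj.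
Qed.

Lemma blocks_through (Q : {set T}) (i : I) : #|Q| <= t -> i \in D ->
  #|[set X in supsets Q [set: T] t | X \subset blk i]|
    = (Q \subset blk i) * 'C(k - #|Q|, t - #|Q|).
Proof.
move=> leQt iD; have -> : [set X in supsets Q [set: T] t | X \subset blk i]
    = supsets Q (blk i) t.
  apply/setP => X; rewrite !inE subsetT.
  by case: (Q \subset X) (X \subset blk i) (#|X| == t) => [] [] [].
rewrite card_supsets // -(blk_card iD).
by case: (boolP (Q \subset blk i)) => // Qi; rewrite cardsD (setIidPr Qi).
Qed.

(* The packing identity: each t-set through Q is either a hole or lies in
   exactly one block through Q. *)
Lemma packing_count (Q : {set T}) : #|Q| <= t ->
  'C(#|T| - #|Q|, t - #|Q|) = #|holes Q| + 'C(k - #|Q|, t - #|Q|) * #|covers Q|.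
Proof.
move=> leQt; have cT : #|T| - #|Q| = #|[set: T] :\: Q| by rewrite cardsD setTI cardsT.
have := card_supsets [set: T] leQt; rewrite subsetT mul1n -cT => <-.
rewrite -sum1_card.
rewrite (eq_bigr (fun X => (covers X == set0) + #|covers X|)) => [|X]; last first.
  rewrite inE => /and3P[_ _ /eqP /covers_le1].
  by rewrite -cards_eq0; case: #|covers X| => [|[]].
rewrite big_split /= -card_setE; congr (_ + _).
rewrite (eq_bigr (fun X : {set T} => \sum_(i in D) (X \subset blk i : nat))) => [|X _]; last first.
  by rewrite -card_setE.
rewrite exchange_big /= card_setE big_distrr /=; apply: eq_bigr => i iD.
by rewrite -card_setE blocks_through // mulnC.
Qed.

Lemma covers0 : covers set0 = D.
Proof. by apply/setP => i; rewrite inE sub0set andbT. Qed.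

Lemma holesE (Q : {set T}) : holes Q = [set X in holes set0 | Q \subset X].
Proof.
apply/setP => X; rewrite !inE sub0set.
by case: (Q \subset X) (X \subset [set: T]) (#|X| == t) (covers X == set0) => [] [] [] [].
Qed.
End Packing.

(* Four triples in which every point has degree divisible by 3 are all the
   triples of a 4-set: degrees are 0 or 3, and they sum to 3 * 4. *)
Lemma four_triples (T : finType) (H : {set {set T}}) :
  {in H, forall X : {set T}, #|X| = 3} -> #|H| = 4 ->
  (forall p, 3 %| #|[set X in H | p \in X]|) ->
  exists2 S : {set T}, #|S| = 4 & H = supsets set0 S 3.
Proof.
move=> H3 cH deg3; pose deg p := #|[set X in H | p \in X]|.
pose S := [set p | 0 < deg p].
have degE p : deg p = 3 * (p \in S).
  have : deg p <= 4.
    by rewrite -cH subset_leq_card //; apply/subsetP => X; rewrite inE => /andP[].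
  by move: (deg3 p); rewrite inE /deg; case: #|_| => [|[|[|[|[]]]]].
have sum_deg : \sum_p deg p = 3 * #|H|.
  rewrite (eq_bigr _ (fun p _ => card_setE H (fun X => p \in X))) exchange_big /=.
  by rewrite (eq_bigr _ (fun X XH => etrans (sum_mem X) (H3 X XH))) sum_nat_const mulnC.
have cS : #|S| = 4.
  apply/eqP; rewrite -(eqn_pmul2l (isT : 0 < 3)) -cH -sum_deg -sum_mem big_distrr /=.
  by apply/eqP/eq_bigr => p _; rewrite degE.
exists S => //; apply/eqP; rewrite eqEcard card_supsets ?cards0 //.
rewrite sub0set setD0 cS cH leqnn andbT; apply/subsetP => X XH.
rewrite inE sub0set H3 // eqxx andbT; apply/subsetP => p pX.
by rewrite inE card_gt0; apply/set0Pn; exists X; rewrite inE XH.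
Qed.

(* A u x v (0,1)-matrix as the set of cells carrying a 1; the correlation
   with cyclic shift r is the size of an intersection of such sets. *)
Section Support.
Variables u v : nat.

Definition supp (A : 'M[bool]_(u, v)) : {set 'I_u * 'I_v} := [set p | A p.1 p.2].

Definition shift (r : 'I_v) (p : 'I_u * 'I_v) : 'I_u * 'I_v := (p.1, cshift p.2 r).

Lemma sum_cells (f : 'I_u -> 'I_v -> bool) :
  \sum_(i < u) \sum_(j < v) (f i j : nat) = #|[set p : 'I_u * 'I_v | f p.1 p.2]|.
Proof. by rewrite pair_big /= -sum_mem; apply: eq_bigr => p _; rewrite inE. Qed.

Lemma mweight_supp (A : 'M[bool]_(u, v)) : mweight A = #|supp A|.
Proof. by rewrite /mweight sum_cells. Qed.

Lemma mcorr_supp (A B : 'M[bool]_(u, v)) (r : 'I_v) :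
  mcorr A B r = #|supp A :&: shift r @^-1: supp B|.
Proof. by rewrite /mcorr sum_cells; apply: eq_card => p; rewrite !inE. Qed.

Lemma OOC_supp_card (w lam : nat) (C : {set 'M[bool]_(u, v)}) (A : 'M[bool]_(u, v)) :
  is_OOC w lam C -> A \in C -> #|supp A| = w.
Proof. by case/andP => /forall_inP wC _ /wC /eqP; rewrite mweight_supp. Qed.

Lemma OOC_supp_meet (w lam : nat) (C : {set 'M[bool]_(u, v)}) (A B : 'M[bool]_(u, v)) (r : 'I_v) :
  is_OOC w lam C -> A \in C -> B \in C -> (A != B) || (r != 0 :> nat) ->
  #|supp A :&: shift r @^-1: supp B| <= lam.
Proof.
case/andP => _ /forall_inP corrC hA hB nontriv.
by have /forall_inP/(_ B hB)/forallP/(_ r)/implyP := corrC A hA; rewrite mcorr_supp; apply.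
Qed.
End Support.

(* Two columns: the only nontrivial shift is the column flip, and a codeword A
   gives the blocks (A, false) = its support and (A, true) = the flipped one. *)
Section TwoColumns.
Variable u : nat.
Local Notation cell := ('I_u * 'I_2)%type.

Definition flip : cell -> cell := shift (ord_max : 'I_2).

Lemma preim_shift0 (X : {set cell}) : shift (ord0 : 'I_2) @^-1: X = X.
Proof.
apply/setP => -[i j]; rewrite inE; congr (_ \in X); congr (_, _).
by apply: val_inj; rewrite /= addn0 modn_small.
Qed.

Lemma flipK : involutive flip.
Proof. by case=> i [[|[|//]] ?]; congr (_, _); apply: val_inj. Qed.

Lemma flip_neq (p : cell) : flip p != p.
Proof. by case: p => i [[|[|//]] ?]; rewrite /flip /shift xpair_eqE eqxx. Qed.

Definition block (Ab : 'M[bool]_(u, 2) * bool) : {set cell} :=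
  if Ab.2 then flip @^-1: supp Ab.1 else supp Ab.1.

Lemma preim_flip_block (A : 'M[bool]_(u, 2)) (b : bool) :
  flip @^-1: block (A, b) = block (A, ~~ b).
Proof. by case: b; apply/setP => p; rewrite /block /= !inE ?flipK. Qed.

Lemma preim_flipK (X : {set cell}) : flip @^-1: (flip @^-1: X) = X.
Proof. by apply/setP => p; rewrite !inE flipK. Qed.

Lemma card_cells : #|{: cell}| = u * 2.
Proof. by rewrite card_prod !card_ord. Qed.

Section Code.
Variable C : {set 'M[bool]_(u, 2)}.
Hypothesis C_ooc : is_OOC 4 2 C.

Definition indices : {set 'M[bool]_(u, 2) * bool} := setX C [set: bool].

Lemma block_card : {in indices, forall i, #|block i| = 4}.
Proof.
move=> [A b]; rewrite inE /block /= => /andP[hA _].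
by case: b; rewrite ?card_preimset ?(OOC_supp_card C_ooc hA) //; apply: inv_inj flipK.
Qed.

(* Distinct blocks share at most two cells: this is the OOC condition with
   shift 0 (two supports, or two flipped supports) or shift 1 (mixed). *)
Lemma block_meet : {in indices &, forall i j, i != j -> #|block i :&: block j| < 3}.
Proof.
have meet0 A B : A \in C -> B \in C -> A != B -> #|supp A :&: supp B| <= 2.
  move=> hA hB AB; have := OOC_supp_meet (r := ord0 : 'I_2) C_ooc hA hB.
  by rewrite AB preim_shift0; apply.
have meet1 A B : A \in C -> B \in C -> #|supp A :&: flip @^-1: supp B| <= 2.
  by move=> hA hB; apply: (OOC_supp_meet (r := ord_max : 'I_2) C_ooc hA hB); rewrite orbT.
move=> [A b] [B c]; rewrite !inE /block /= xpair_eqE => /andP[hA _] /andP[hB _].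
case: b c => [] [] /=; rewrite ?andbT ?andbF // => AB.
- by rewrite -preimsetI card_preimset; [apply: meet0 | apply: inv_inj flipK].
- by rewrite setIC; apply: meet1.
- exact: meet1.
- exact: meet0.
Qed.

Local Notation covered := (covers indices block).
Local Notation holes3 := (holes 3 indices block).

Lemma covers_flip_stable (Q : {set cell}) : flip @^-1: Q = Q ->
  covered Q = setX [set A in C | Q \subset supp A] [set: bool].
Proof.
move=> flipQ; have flip_sub (Y : {set cell}) : (Q \subset flip @^-1: Y) = (Q \subset Y).
  by apply/idP/idP => sub; have := preimsetS flip sub; rewrite flipQ ?preim_flipK.
by apply/setP => -[A b]; rewrite !inE /block /=; case: b; rewrite ?flip_sub !andbT.
Qed.

(* The family of blocks is flip-stable, hence so are the holes. *)
Lemma holes_flip (X : {set cell}) : X \in holes3 set0 -> flip @^-1: X \in holes3 set0.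
Proof.
rewrite !inE !sub0set !subsetT card_preimset; last exact: inv_inj flipK.
case/andP=> -> /eqP coverX; apply/eqP/setP => -[A b]; rewrite !inE /=.
apply/negbTE/andP => -[iA /subsetP Xsub].
suff : (A, ~~ b) \in covered X by rewrite coverX inE.
rewrite inE -preim_flip_block; apply/andP; split; first by move: iA; rewrite !inE.
by apply/subsetP => p pX; rewrite inE; apply: Xsub; rewrite inE flipK.
Qed.

(* Every cell lies in 0 or 3 holes, by the packing identity for Q = {p}. *)
Lemma hole_degree_div3 : 3 %| 'C(u * 2 - 1, 2) ->
  forall p : cell, 3 %| #|[set X in holes3 set0 | p \in X]|.
Proof.
move=> div3 p; have := packing_count block_card block_meet (Q := [set p]).
rewrite cards1 card_cells => /(_ isT) count.
rewrite (eq_card (B := holes3 [set p])) => [|X]; last first.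
  by rewrite (holesE _ _ _ [set p]) !inE sub1set.
by move: div3; rewrite count dvdn_addl // dvdn_mulr.
Qed.

(* The holes through a flip-stable pair {p, flip p} are counted modulo 4, by
   the packing identity for that pair: its blocks come in pairs. *)
Lemma hole_pair_div4 : 4 %| u * 2 - 2 -> forall p : cell, 4 %| #|holes3 [set p; flip p]|.
Proof.
move=> div4 p; have c_pair : #|[set p; flip p]| = 2 by rewrite cards2 eq_sym flip_neq.
have := packing_count block_card block_meet (Q := [set p; flip p]).
rewrite c_pair card_cells bin1 => /(_ isT) count.
move: div4; rewrite count covers_flip_stable; last first.
  by apply/setP => q; rewrite !inE (inj_eq (inv_inj flipK)) (can2_eq flipK flipK) orbC.
rewrite cardsX cardsT card_bool (_ : 'C(4 - 2, 3 - 2) = 2) // (mulnCA 2).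
by rewrite dvdn_addl // dvdn_mull.
Qed.

Lemma holes_ne4 : 3 %| 'C(u * 2 - 1, 2) -> 4 %| u * 2 - 2 -> #|holes3 set0| != 4.
Proof.
move=> div3 div4; apply/negP => /eqP four_holes.
have triple : {in holes3 set0, forall X : {set cell}, #|X| = 3}.
  by move=> X; rewrite !inE => /andP[/and3P[_ _ /eqP]].
have [S cS holesS] := four_triples triple four_holes (hole_degree_div3 div3).
have holes_through (Q : {set cell}) : Q \subset S -> #|Q| <= 3 ->
    #|[set X in holes3 set0 | Q \subset X]| = 'C(4 - #|Q|, 3 - #|Q|).
  move=> QS leQ3; rewrite holesS supsets_through card_supsets // QS.
  by rewrite cardsD (setIidPr QS) cS mul1n.
have [p pS] : exists p, p \in S by apply/set0Pn; rewrite -card_gt0 cS.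
have flip_pS : flip p \in S.
  have : 0 < #|[set X in holes3 set0 | [set p] \subset X]|.
    by rewrite holes_through ?sub1set ?cards1.
  case/card_gt0P => X; rewrite inE sub1set => /andP[/holes_flip flipX pX].
  move: flipX; rewrite holesS inE => /and3P[_ /subsetP flipXS _].
  by apply: flipXS; rewrite inE flipK.
have := hole_pair_div4 div4 p; rewrite (holesE _ _ _ [set p; flip p]) holes_through.
- by rewrite cards2 eq_sym flip_neq.
- by rewrite subUset !sub1set pS flip_pS.
- by rewrite cards2 eq_sym flip_neq.
Qed.
End Code.
End TwoColumns.

Lemma bin_ffact3 (n : nat) : 'C(n, 3) * 6 = n * n.-1 * n.-2.
Proof. by rewrite (bin_ffact n 3) !ffactnS ffactn0 muln1 mulnA. Qed.

Lemma bin_ffact2 (n : nat) : 'C(n, 2) * 2 = n * n.-1.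
Proof. by rewrite (bin_ffact n 2) !ffactnS ffactn0 muln1. Qed.

Lemma arith_of_factor (u m : nat) : odd u -> (2 * u - 1) * (u - 1) = 6 * m ->
  [/\ 'C(u * 2, 3) = 4 * (u * m),
      u * (((2 * u - 1) * ((2 * u - 2) %/ 2)) %/ 3) = 2 * (u * m),
      3 %| 'C(u * 2 - 1, 2) & 4 %| u * 2 - 2].
Proof.
move=> odd_u fac.
have half : (2 * u - 2) %/ 2 = u - 1 by rewrite (_ : 2 * u - 2 = 2 * (u - 1)) ?mulKn //; lia.
split.
- apply/eqP; rewrite -(eqn_pmul2r (isT : 0 < 6)) bin_ffact3; apply/eqP.
  have -> : (u * 2).-2 = 2 * (u - 1) by lia.
  have -> : (u * 2).-1 = 2 * u - 1 by lia.
  have -> : u * 2 * (2 * u - 1) * (2 * (u - 1)) = 4 * u * ((2 * u - 1) * (u - 1)) by ring.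
  by rewrite fac; ring.
- rewrite half fac (_ : 6 * m = 3 * (2 * m)); last by lia.
  by rewrite mulKn // mulnCA.
- apply/dvdnP; exists (2 * m); apply/eqP.
  rewrite -(eqn_pmul2r (isT : 0 < 2)) bin_ffact2; apply/eqP.
  have -> : (u * 2 - 1).-1 = 2 * (u - 1) by lia.
  have -> : u * 2 - 1 = 2 * u - 1 by lia.
  by rewrite mulnCA fac; ring.
- apply/dvdnP; exists u./2; have := odd_double_half u; rewrite odd_u -muln2.
  by move: u./2 => a; lia.
Qed.

Lemma residue_factor (u : nat) : (u %% 12 == 7) || (u %% 12 == 11) ->
  exists m, [/\ odd u, odd m & (2 * u - 1) * (u - 1) = 6 * m].
Proof.
move: (divn_eq u 12); move: (u %/ 12) (u %% 12) => k r -> /orP[] /eqP ->.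
- exists ((24 * k + 13) * (2 * k + 1)); split; rewrite ?(oddD, oddM) /= ?andbF //.
  have -> : 2 * (k * 12 + 7) - 1 = 24 * k + 13 by lia.
  have -> : k * 12 + 7 - 1 = 6 * (2 * k + 1) by lia.
  by rewrite mulnCA.
- exists ((8 * k + 7) * (6 * k + 5)); split; rewrite ?(oddD, oddM) /= ?andbF //.
  have -> : 2 * (k * 12 + 11) - 1 = 3 * (8 * k + 7) by lia.
  have -> : k * 12 + 11 - 1 = 2 * (6 * k + 5) by lia.
  by rewrite mulnACA.
Qed.

(* The final count: with C(2u, 3) = 4q, q odd, the identity
   4q = h + 8|C| and h <> 4 force 2|C| <= q - 3. *)
Lemma code_size_bound (q h c : nat) : odd q -> h != 4 -> 4 * q = h + 4 * (c * 2) ->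
  c <= (2 * q) %/ 4 - 1.
Proof.
move=> odd_q; have := odd_double_half q; rewrite odd_q -muln2.
by move: q./2 => r; lia.
Qed.

Theorem lemma5p6 (u : nat) (hu : (u %% 12 == 7) || (u %% 12 == 11)) :
  Phi u 2 4 2 <= (u * (((2 * u - 1) * ((2 * u - 2) %/ 2)) %/ 3)) %/ 4 - 1.
Proof.
have [m [odd_u odd_m fac]] := residue_factor hu.
have [binC -> div3 div4] := arith_of_factor odd_u fac.
rewrite /Phi; apply/bigmax_leqP => C C_ooc.
have := packing_count (block_card C_ooc) (block_meet C_ooc) (Q := set0).
rewrite cards0 !subn0 card_cells binC covers0 cardsX cardsT card_bool => /(_ isT).
rewrite (_ : 'C(4, 3) = 4) //; apply: code_size_bound (holes_ne4 C_ooc div3 div4).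
by rewrite oddM odd_u.
Qed.
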